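(* Let $T=7$ (so $\mathit{CP}=\{0\}$) and $D\ge 1$. Let $G$ be the path $v_0 - v_1 - \dots - v_D$, and suppose the adversary activates only $v_0$, in round $0$ (all other nodes are activated by beeps of neighbors). Then under Algorithm FS, the smallest round $t$ such that $\delta_t(v_0)=\delta_t(v_1)=\dots=\delta_t(v_D)$ (with all nodes active) is exactly $t=7D$. Hence the bound $4D+\lfloor D/\lfloor T/4\rfloor\rfloor\cdot(T\bmod 4)$ of Theorem 1 is attained.
   Context: Model (beeping model with arbitrary activations). Synchronous rounds; in each round each active node either beeps or listens; a listening node learns only whether at least one neighbor beeped. Checkpoints: $\mathit{CP}=\{c\in\mathbb{N}_0: c\equiv 0\pmod 4,\ T-c>3\}$. Algorithm FS. Each node $v$ stores $\delta(v)\in\{0,\dots,T-1\}$, $\mathit{State}(v)\in\{\mathit{Inactive},\mathit{Beep},\mathit{Listen}\}$, $\mathit{Induced}(v)\in\{\mathit{true},\mathit{false}\}$. Initially all nodes are Inactive. A node $v$ is activated in round $t$ if the adversary activates it in round $t$, or $v$ is inactive and some neighbor beeps in round $t-1$; then at the beginning of round $t$, $\delta(v)=1$, $\mathit{State}(v)=\mathit{Beep}$, $\mathit{Induced}(v)=\mathit{true}$. In each round each active node $v$, according to its state at the beginning of the round: (1) if $\mathit{State}(v)=\mathit{Beep}$: beeps; $\delta(v)\gets\delta(v)+1\bmod T$; $\mathit{State}(v)\gets\mathit{Listen}$; (2) if $\mathit{State}(v)=\mathit{Listen}$ and some neighbor beeps: if $\delta(v)\equiv c-1\pmod T$ for some $c\in\mathit{CP}$,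 then $\delta(v)\gets\delta(v)+2\bmod T$, $\mathit{State}(v)\gets\mathit{Beep}$, $\mathit{Induced}(v)\gets\mathit{true}$; else $\delta(v)\gets\delta(v)+1\bmod T$; (3) if $\mathit{State}(v)=\mathit{Listen}$ and no neighbor beeps: $\delta(v)\gets\delta(v)+1\bmod T$; then if ($\mathit{Induced}(v)=\mathit{true}$ and new $\delta(v)\in\mathit{CP}$) or new $\delta(v)=0$: $\mathit{State}(v)\gets\mathit{Beep}$, $\mathit{Induced}(v)\gets\mathit{false}$. $\delta_t(v)$ denotes the value at the beginning of round $t$. *)

From mathcomp Require Import all_boot.
Set Implicit Arguments. Unset Strict Implicit. Unset Printing Implicit Defensive.

Inductive phase := PBeep | PListen.

Record nstate := NS { delta : nat; ph : phase; induced : bool }.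

(* A configuration at the beginning of a round: None = Inactive. *)
Definition config (V : finType) := V -> option nstate.

Definition isCP (T c : nat) : bool := (c %% 4 == 0) && (c + 3 < T).

(* delta = c - 1 (mod T) for some c in CP (every c in CP is < T). *)
Definition before_CP (T d : nat) : bool :=
  has (fun c => isCP T c && (d.+1 %% T == c)) (iota 0 T).

Definition activated_state := NS 1 PBeep true.

Definition beeps (s : option nstate) : bool :=
  if s is Some (NS _ PBeep _) then true else false.

Definition node_update (T : nat) (heard : bool) (s : nstate) : nstate :=
  match ph s with
  | PBeep => NS ((delta s).+1 %% T) PListen (induced s)
  | PListen =>
    if heard then
      if before_CP T (delta s) then NS ((delta s).+2 %% T) PBeep true
      else NS ((delta s).+1 %% T) PListen (induced s)
    else
      let d' := (delta s).+1 %% T in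
      if (induced s && isCP T d') || (d' == 0) then NS d' PBeep false
      else NS d' PListen (induced s)
  end.

Section Run.
Variables (V : finType) (T : nat) (adj : rel V) (adv : nat -> pred V).
(* adv t v : the adversary activates v in round t. *)

Definition step (t : nat) (c : config V) : config V := fun v =>
  let heard := [exists u, adj v u && beeps (c u)] in
  if adv t.+1 v then Some activated_state else
  match c v with
  | None => if heard then Some activated_state else None
  | Some s => Some (node_update T heard s)
  end.

Definition init : config V := fun v =>
  if adv 0 v then Some activated_state else None.

(* Configuration at the beginning of round t. *)
Fixpoint run (t : nat) : config V :=
  match t with
  | 0 => init
  | t'.+1 => step t' (run t')
  end.

Definition synced (t : nat) : Prop :=
  exists d, forall v, option_map delta (run t v) = Some d.
End Run.

Definition path_adj (D : nat) : rel 'I_D.+1 :=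
  fun i j => (i.+1 == j :> nat) || (j.+1 == i :> nat).

Definition adv_v0 (D : nat) : nat -> pred 'I_D.+1 :=
  fun t v => (t == 0) && (v == ord0).
Arguments path_adj D : clear implicits.
Arguments adv_v0 D : clear implicits.

From mathcomp Require Import all_boot zify.

(* For T = 7 the only checkpoint is 0, so a node's update no
   longer depends on its Induced flag: a listening node with delta = 6 beeps in
   the next round, and it additionally skips a step (delta jumps to 1) exactly
   when it hears a beep.  On the path activated at v_0 we guess the whole run in
   closed form: node v is activated in round v; until round 7v it is in its
   "induced" regime, beeping every 6 rounds with delta(t) = (t - v) mod 6 + 1,
   each jump being triggered by its left neighbour; from round 7v on it follows
   the global clock, delta(t) = (t + 1) mod 7, beeping when delta = 0.
   The file first simplifies the update rule for T = 7, then proves the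
   arithmetic facts about the closed form (its one-round evolution and which
   nodes hear a beep), then shows by induction on t that the run follows the
   closed form.  The theorem is read off: at t = 7D every delta equals 1, while
   for t < 7D the two last nodes v_{D-1} and v_D still disagree. *)

Lemma isCP7 c : isCP 7 c = (c == 0).
Proof. by rewrite /isCP; apply/andP/eqP => [[/eqP ? ?]|->] //; lia. Qed.

Lemma before_CP7 d : before_CP 7 d = (d.+1 %% 7 == 0).
Proof. by rewrite /before_CP /= orbF. Qed.

Lemma beeps_update7 heard s :
  beeps (Some (node_update 7 heard s)) = ~~ beeps (Some s) && ((delta s).+1 %% 7 == 0).
Proof.
case: s => d [] b //; rewrite /node_update /=.
by case: heard; rewrite ?before_CP7 ?isCP7; case: eqP; rewrite ?orbF ?orbT ?andbF.
Qed.

Lemma delta_update7 heard s :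
  delta (node_update 7 heard s) =
  (if [&& ~~ beeps (Some s), heard & (delta s).+1 %% 7 == 0]
   then (delta s).+2 else (delta s).+1) %% 7.
Proof.
case: s => d [] b //; rewrite /node_update /=.
by case: heard; rewrite ?before_CP7 ?isCP7; case: eqP; rewrite ?orbF ?orbT ?andbF.
Qed.

Definition fs_delta (t v : nat) : nat :=
  if t <= 7 * v then (t - v) %% 6 + 1 else t.+1 %% 7.

Definition fs_beep (t v : nat) : bool :=
  if t <= 7 * v then (t - v) %% 6 == 0 else t.+1 %% 7 == 0.

Definition fs_beeping (t v : nat) : bool := (v <= t) && fs_beep t v.

Definition fs_heard (D t v : nat) : bool :=
  (v < D) && fs_beeping t v.+1 || (0 < v) && fs_beeping t v.-1.

Lemma fs_beep_step t v : v <= t ->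
  fs_beep t.+1 v = ~~ fs_beep t v && ((fs_delta t v).+1 %% 7 == 0).
Proof. by rewrite /fs_beep /fs_delta => ?; do 2 case: ifP => ?; lia. Qed.

Lemma fs_delta_step t v : v <= t ->
  fs_delta t.+1 v =
  (if [&& ~~ fs_beep t v, t < 7 * v & (fs_delta t v).+1 %% 7 == 0]
   then (fs_delta t v).+2 else (fs_delta t v).+1) %% 7.
Proof.
rewrite /fs_beep /fs_delta => ?.
by case: (leqP t (7 * v)) => ?; case: (leqP t.+1 (7 * v)) => ?; case: ifP => /= ?; lia.
Qed.

Lemma fs_heard_inactive D t v : t < v -> fs_heard D t v = (t.+1 == v).
Proof.
rewrite /fs_heard /fs_beeping /fs_beep => ?.
case: (leqP t (7 * v.-1)) => ?; lia.
Qed.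

(* A node with delta = 6 hears a beep iff it is still in the induced regime:
   its left neighbour then beeps, while in the clock regime no neighbour does. *)
Lemma fs_heard_deadline D t v : v <= t -> v <= D -> (fs_delta t v).+1 %% 7 = 0 ->
  fs_heard D t v = (t < 7 * v).
Proof.
rewrite /fs_heard /fs_beeping /fs_beep /fs_delta => ? ?.
case: (leqP t (7 * v)) => ?; case: (leqP t (7 * v.+1)) => ?.
all: case: (leqP t (7 * v.-1)) => ?; lia.
Qed.

Lemma fs_delta_final D v : v <= D -> fs_delta (7 * D) v = 1.
Proof. by rewrite /fs_delta => ?; case: ifP => ?; lia. Qed.

Lemma fs_delta_last_distinct D t : 1 <= D -> D <= t < 7 * D ->
  fs_delta t D != fs_delta t D.-1.
Proof.
rewrite /fs_delta => ? ?.
by case: (leqP t (7 * D)) => ?; case: (leqP t (7 * D.-1)) => ?; lia.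
Qed.

Section PathRun.
Variable D : nat.

Local Notation state := (run 7 (path_adj D) (adv_v0 D)).

Definition follows_fs (t : nat) : Prop :=
  forall v : 'I_D.+1, match state t v with
  | None => t < v
  | Some s => v <= t /\ delta s = fs_delta t v /\ beeps (Some s) = fs_beep t v
  end.

Lemma exists_path_neighbour (v : 'I_D.+1) (P : nat -> bool) :
  [exists u, path_adj D v u && P u] = (v < D) && P v.+1 || (0 < v) && P v.-1.
Proof.
apply/existsP/orP => [[u /andP[/orP[] /eqP uv Pu]]|[/andP[vD Pv]|/andP[v0 Pv]]].
- by left; rewrite uv Pu andbT -ltnS ltn_ord.
- by right; rewrite -uv /= Pu.
- by exists (Ordinal (vD : v.+1 < D.+1)); rewrite /path_adj /= eqxx.
- have lt_v1 : v.-1 < D.+1 by rewrite (leq_ltn_trans (leq_pred v)).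
  by exists (Ordinal lt_v1); rewrite /path_adj /= prednK // eqxx orbT.
Qed.

Lemma heard_follows t (v : 'I_D.+1) : follows_fs t ->
  [exists u, path_adj D v u && beeps (state t u)] = fs_heard D t v.
Proof.
move=> inv; have beeps_fs (u : 'I_D.+1) : beeps (state t u) = fs_beeping t u.
  move: (inv u); rewrite /fs_beeping.
  by case: (state t u) => [s [-> [_ ->]]|tu] //; rewrite leqNgt tu.
have -> : [exists u, path_adj D v u && beeps (state t u)] =
          [exists u : 'I_D.+1, path_adj D v u && fs_beeping t u].
  by apply: eq_existsb => u; rewrite beeps_fs.
apply: exists_path_neighbour.
Qed.

Lemma follows_fs0 : follows_fs 0.
Proof.
move=> v; rewrite /= /init /adv_v0 /=.
by case: (eqVneq v ord0) => [->|]; last case: v => [[]].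
Qed.

(* After round 0 the adversary is silent: nodes are activated by beeps only. *)
Lemma state_succ t (v : 'I_D.+1) :
  state t.+1 v =
  let heard := [exists u, path_adj D v u && beeps (state t u)] in
  if state t v is Some s then Some (node_update 7 heard s)
  else if heard then Some activated_state else None.
Proof. by []. Qed.

Lemma follows_fsS t : follows_fs t -> follows_fs t.+1.
Proof.
move=> inv v; have vD : v <= D by rewrite -ltnS.
rewrite state_succ heard_follows //.
move: (inv v); case: (state t v) => [s [vt [ds bs]]|tv].
  split; first exact: leqW.
  rewrite delta_update7 beeps_update7 ds bs fs_delta_step // fs_beep_step //.
  split=> //; case: (boolP ((fs_delta t v).+1 %% 7 == 0)) => [/eqP d6|].
    by rewrite fs_heard_deadline.
  by rewrite !andbF.
rewrite fs_heard_inactive //; case: eqP => [<-|]; last lia.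
have early : t < 7 * t.+1 by lia.
by rewrite /fs_delta /fs_beep leqnn subnn early.
Qed.

Lemma follows_fs_all t : follows_fs t.
Proof. by elim: t => [|t]; [exact: follows_fs0 | exact: follows_fsS]. Qed.

Lemma delta_run t (v : 'I_D.+1) :
  option_map delta (state t v) = if v <= t then Some (fs_delta t v) else None.
Proof.
move: (follows_fs_all t v); case: (state t v) => [s|] /= => [[vt [-> _]]|tv].
  by rewrite vt.
by rewrite leqNgt tv.
Qed.

End PathRun.

Theorem mainTheorem3 (D : nat) (hD : 1 <= D) :
  synced 7 (path_adj D) (adv_v0 D) (7 * D) /\
  (forall t, t < 7 * D -> ~ synced 7 (path_adj D) (adv_v0 D) t) /\
  7 * D = 4 * D + (D %/ (7 %/ 4)) * (7 %% 4).
Proof.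
split; [|split].
- exists 1 => v; have v7D : v <= 7 * D by have := ltn_ord v; lia.
  by rewrite delta_run v7D fs_delta_final // -ltnS.
- move=> t ltD [d synced_d]; have lt_pred : D.-1 < D.+1 by lia.
  move: (synced_d ord_max) (synced_d (Ordinal lt_pred)); rewrite !delta_run /=.
  case: (leqP D t) => [Dt|] //; rewrite (leq_trans (leq_pred D) Dt) => -[<-] [/eqP].
  by rewrite eq_sym (negbTE (fs_delta_last_distinct D t hD _)) // Dt ltD.
- by rewrite (_ : 7 %/ 4 = 1) // (_ : 7 %% 4 = 3) // divn1 [D * 3]mulnC -mulnDl.
Qed.
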